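(* Let $\mathcal{X}$ and $\mathcal{Y}$ be finite sets with $2 \le |\mathcal{X}|,|\mathcal{Y}| < \infty$, and let $X,Y$ have joint pmf $P_{X,Y}$ with $P_X(x)>0$ for all $x\in\mathcal{X}$ and $P_Y(y)>0$ for all $y\in\mathcal{Y}$. Then $$\eta_{\chi^2}(P_X,P_{Y|X}) \le \eta_{\mathrm{KL}}(P_X,P_{Y|X}) \le \frac{\eta_{\chi^2}(P_X,P_{Y|X})}{\min_{x\in\mathcal{X}}P_X(x)}.$$
   Context: Let $W$ be the column stochastic matrix of the channel $P_{Y|X}$ (its $x$th column is $P_{Y|X=x}$), mapping a pmf $R_X$ on $\mathcal{X}$ to $WR_X$ on $\mathcal{Y}$. The KL divergence is $D(R_X\|P_X)=\sum_x R_X(x)\log(R_X(x)/P_X(x))$ (natural log), and the $\chi^2$-divergence is $\chi^2(R_X\|P_X)=\sum_x (R_X(x)-P_X(x))^2/P_X(x)$. For a divergence $D_\bullet$ in $\{D,\chi^2\}$, the contraction coefficient is $\eta_\bullet(P_X,P_{Y|X})=\sup\{D_\bullet(WR_X\|WP_X)/D_\bullet(R_X\|P_X): R_X \text{ a pmf on } \mathcal{X},\ 0<D_\bullet(R_X\|P_X)<\infty\}$; $\eta_{\mathrm{KL}}$ is the one for KL divergence and $\eta_{\chi^2}$ the one for $\chi^2$-divergence. *)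

From HB Require Import structures.
From mathcomp Require Import all_boot all_order all_algebra.
From mathcomp Require Import all_classical all_reals all_analysis.
Set Implicit Arguments. Unset Strict Implicit. Unset Printing Implicit Defensive.
Import Order.TTheory GRing.Theory Num.Theory.
Local Open Scope ring_scope.
Local Open Scope classical_set_scope.

Section Defs.
Context {R : realType}.

Definition is_pmf {T : finType} (Q : T -> R) : Prop :=
  (forall t, 0 <= Q t) /\ \sum_t Q t = 1.

(* KL divergence, natural log, with the convention 0 log(0/p) = 0.
   Only used with a reference pmf P having full support, where D is finite. *)
Definition KL {T : finType} (Q P : T -> R) : R :=
  \sum_t (if Q t == 0 then 0 else Q t * ln (Q t / P t)).

Definition chi2 {T : finType} (Q P : T -> R) : R :=
  \sum_t (Q t - P t) ^+ 2 / P t.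

Definition margX {X Y : finType} (PXY : X -> Y -> R) (x : X) : R := \sum_y PXY x y.
Definition margY {X Y : finType} (PXY : X -> Y -> R) (y : Y) : R := \sum_x PXY x y.

(* column stochastic channel matrix W(y|x) = P_{Y|X=x}(y) *)
Definition chanW {X Y : finType} (PXY : X -> Y -> R) (y : Y) (x : X) : R :=
  PXY x y / margX PXY x.

Definition applyW {X Y : finType} (PXY : X -> Y -> R) (Q : X -> R) (y : Y) : R :=
  \sum_x chanW PXY y x * Q x.

Definition eta_div (Div : forall T : finType, (T -> R) -> (T -> R) -> R)
    {X Y : finType} (PXY : X -> Y -> R) : \bar R :=
  ereal_sup [set ((Div Y (applyW PXY Q) (applyW PXY (margX PXY))
                    / Div X Q (margX PXY))%:E) |
             Q in [set Q : X -> R | is_pmf Q /\ 0 < Div X Q (margX PXY)]].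

Definition eta_KL {X Y : finType} (PXY : X -> Y -> R) : \bar R :=
  eta_div (fun T => @KL T) PXY.
Definition eta_chi2 {X Y : finType} (PXY : X -> Y -> R) : \bar R :=
  eta_div (fun T => @chi2 T) PXY.

Definition minf {T : finType} (f : T -> R) : R :=
  fine (\big[mine/+oo%E]_t (f t)%:E).

End Defs.

From HB Require Import structures.
From mathcomp Require Import all_boot all_order all_algebra.
From mathcomp Require Import all_classical all_reals all_analysis.
From mathcomp Require Import ring lra.
Import Order.TTheory GRing.Theory Num.Theory.
Local Open Scope ring_scope.

(* For the upper bound, KL <= chi^2 at the output, while at the input Pinsker's
   inequality KL(Q||P) >= |Q - P|_1^2 / 2 and the estimate
   chi^2(Q||P) <= |Q - P|_1^2 / (2 min P), which holds because every
   |Q x - P x| is at most |Q - P|_1 / 2, give KL(Q||P) >= min P * chi^2(Q||P).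
   For the lower bound, mix Q_t = P + t (Q - P): both KL(Q_t||P) and
   KL(W Q_t||W P) are t^2/2 times the corresponding chi^2-divergences up to a
   factor 1 + O(t), so the KL ratio tends to the chi^2 ratio as t -> 0.
   All quadratic estimates of KL come from rational bounds on ln, obtained by
   the mean value theorem. *)

Lemma ler_wpdiv2l {R : numFieldType} (x a b : R) :
  0 <= x -> 0 < a -> a <= b -> x / b <= x / a.
Proof.
move=> x0 a0 ab; apply: ler_wpM2l => //.
by rewrite lef_pV2 ?posrE // (lt_le_trans a0 ab).
Qed.

Section LogBounds.
Context {R : realType}.

Lemma is_derive_inv_shift (a x : R) : 0 < x + a ->
  is_derive x 1 (fun y : R => (y + a)^-1) (- (x + a) ^- 2).
Proof.
move=> xa0.
have := @is_deriveV R (fun y => y + a) x 1 1 (lt0r_neq0 xa0) (is_derive_shift x 1 a).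
by move=> /is_derive_eq; apply; rewrite /GRing.scale /= mulr1.
Qed.

Lemma is_derive_inv {x : R} : 0 < x -> is_derive x 1 (fun y : R => y^-1) (- x ^- 2).
Proof.
move=> x0; have := @is_deriveV R id x 1 1 (lt0r_neq0 x0) (is_derive_id x 1).
by move=> /is_derive_eq; apply; rewrite /GRing.scale /= mulr1.
Qed.

(* [0 <= (c - 1) * (r - 1)] says that [c] lies on the same side of [1] as [r]. *)
Lemma ge_at1_of_derive (f df : R -> R) (r : R) : 0 < r ->
  (forall x : R, 0 < x -> is_derive x 1 f (df x)) ->
  (forall c : R, 0 < c -> 0 <= (c - 1) * (r - 1) -> 0 <= df c * (r - 1)) ->
  f 1 <= f r.
Proof.
move=> r0 fd dfsg.
have fd_in (a b : R) : 0 < a -> forall x : R, x \in `]a, b[%R -> is_derive x 1 f (df x).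
  by move=> a0 x; rewrite in_itv /= => /andP[ax _]; apply: fd; exact: lt_trans ax.
have fdvb (a b : R) : 0 < a -> {in `[a, b]%R, forall x, derivable f x 1}.
  move=> a0 x; rewrite in_itv /= => /andP[ax _].
  by have /fd [] : 0 < x by exact: lt_le_trans ax.
case: (ltgtP r 1) => [r1|r1|->//].
- have [c /[!in_itv] /= /andP[rc c1] E] :=
    MVT r1 (fd_in _ _ r0) (derivable_within_continuous (fdvb _ _ r0)).
  have /(dfsg c (lt_trans r0 rc)) : 0 <= (c - 1) * (r - 1) by nra.
  by move: E; lra.
- have [c /[!in_itv] /= /andP[c1 cr] E] :=
    MVT r1 (fd_in _ _ ltr01) (derivable_within_continuous (fdvb _ _ ltr01)).
  have /(dfsg c (lt_trans ltr01 c1)) : 0 <= (c - 1) * (r - 1) by nra.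
  by move: E; lra.
Qed.

(* Equivalently [r ln r - r + 1 >= 3 (r - 1)^2 / (2 (r + 2))]. *)
Lemma ln_ge_rational (r : R) : 0 < r ->
  5/2 - (4 * r)^-1 - 27/4 * (r + 2)^-1 <= ln r.
Proof.
move=> r0.
pose inv (y : R) := y^-1; pose inv2 (y : R) := (y + 2)^-1.
pose f : R -> R := @ln R + 4^-1 *: inv + (27/4) *: inv2.
pose df (x : R) := x^-1 + 4^-1 *: - x ^- 2 + (27/4) *: - (x + 2) ^- 2.
have fd (x : R) : 0 < x -> is_derive x 1 f (df x).
  move=> x0; have x2 : 0 < x + 2 by rewrite addr_gt0.
  apply: is_deriveD; last exact/is_deriveZ/is_derive_inv_shift.
  apply: is_deriveD; first exact: is_derive1_ln.
  exact/is_deriveZ/is_derive_inv.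
have dfsg (c : R) : 0 < c -> 0 <= (c - 1) * (r - 1) -> 0 <= df c * (r - 1).
  move=> c0 cr; have c2 : 0 < c + 2 by rewrite addr_gt0.
  have -> : df c * (r - 1) = (c - 1) ^+ 2 * ((c - 1) * (r - 1)) / (c * (c + 2)) ^+ 2.
    by rewrite /df /GRing.scale /=; field; rewrite !gt_eqF.
  by apply: divr_ge0; rewrite ?sqr_ge0 // mulr_ge0 ?sqr_ge0.
have Ef y : f y = ln y + 4^-1 * y^-1 + 27/4 * (y + 2)^-1 by [].
have := @ge_at1_of_derive f df r r0 fd dfsg.
rewrite !Ef ln1 add0r invr1 invfM (_ : (1 + 2 : R) = 3) //.
lra.
Qed.

Lemma ln_le_ge1 (r : R) : 1 <= r -> ln r <= (r - r^-1) / 2.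
Proof.
move=> r1; have r0 : 0 < r by exact: lt_le_trans r1.
pose inv (y : R) := y^-1.
pose f : R -> R := 2^-1 *: @id R - 2^-1 *: inv - @ln R.
pose df (x : R) := 2^-1 *: (1 : R) - 2^-1 *: - x ^- 2 - x^-1.
have fd (x : R) : 0 < x -> is_derive x 1 f (df x).
  move=> x0; have dinv := is_derive_inv x0.
  exact: is_deriveB (is_deriveB (is_deriveZ _ (is_derive_id x 1)) (is_deriveZ _ dinv))
                    (is_derive1_ln x0).
have dfsg (c : R) : 0 < c -> 0 <= (c - 1) * (r - 1) -> 0 <= df c * (r - 1).
  move=> c0 _.
  have -> : df c * (r - 1) = (c - 1) ^+ 2 * (r - 1) / (2 * c ^+ 2).
    by rewrite /df /GRing.scale /=; field; rewrite gt_eqF.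
  by apply: divr_ge0; apply: mulr_ge0; rewrite ?sqr_ge0 ?subr_ge0.
have Ef y : f y = 2^-1 * y - 2^-1 * y^-1 - ln y by [].
have := @ge_at1_of_derive f df r r0 fd dfsg.
rewrite !Ef ln1 invr1.
lra.
Qed.

Lemma ln_le_le1 (r : R) : 0 < r -> r <= 1 -> ln r <= 2 - 4 * (r + 1)^-1.
Proof.
move=> r0 r1.
pose inv1 (y : R) := (y + 1)^-1.
pose f : R -> R := - (4 *: inv1) - @ln R.
pose df (x : R) := - (4 *: - (x + 1) ^- 2) - x^-1.
have fd (x : R) : 0 < x -> is_derive x 1 f (df x).
  move=> x0; apply: is_deriveB; last exact: is_derive1_ln.
  by apply/is_deriveN/is_deriveZ/is_derive_inv_shift; rewrite addr_gt0.
have dfsg (c : R) : 0 < c -> 0 <= (c - 1) * (r - 1) -> 0 <= df c * (r - 1).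
  move=> c0 _; have c1 : 0 < c + 1 by rewrite addr_gt0.
  have -> : df c * (r - 1) = (c - 1) ^+ 2 * (1 - r) / (c * (c + 1) ^+ 2).
    by rewrite /df /GRing.scale /=; field; rewrite !gt_eqF.
  by apply: divr_ge0; apply: mulr_ge0; rewrite ?sqr_ge0 ?subr_ge0 // ltW.
have Ef y : f y = - (4 * (y + 1)^-1) - ln y by [].
have := @ge_at1_of_derive f df r r0 fd dfsg.
rewrite !Ef ln1 (_ : (1 + 1 : R)^-1 = 2^-1) //.
lra.
Qed.
End LogBounds.

Section Divergences.
Context {R : realType}.

(* The summands of [KL q p] shifted by [p - q]: they are nonnegative and still
   sum to [KL q p] when [q] and [p] have the same total mass. *)
Definition kl_term (q p : R) : R := (if q == 0 then 0 else q * ln (q / p)) - q + p.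

Lemma kl_term_ge {q p : R} : 0 <= q -> 0 < p ->
  3 * (q - p) ^+ 2 / (2 * (q + 2 * p)) <= kl_term q p.
Proof.
move=> q0 p0; rewrite /kl_term; have [->|qn0] := eqVneq q 0.
  rewrite sub0r sqrrN add0r subr0 add0r.
  have -> : 3 * p ^+ 2 / (2 * (2 * p)) = 3 / 4 * p by field; rewrite gt_eqF.
  lra.
have {}q0 : 0 < q by rewrite lt_neqAle eq_sym qn0.
have w0 : q + 2 * p != 0 by rewrite gt_eqF // addr_gt0 ?mulr_gt0.
have -> : 3 * (q - p) ^+ 2 / (2 * (q + 2 * p)) =
    q * (5 / 2 - (4 * (q / p))^-1 - 27 / 4 * (q / p + 2)^-1) - q + p.
  by field; rewrite w0 !gt_eqF.
by rewrite !lerD2r ler_wpM2l ?ln_ge_rational ?divr_gt0 // ltW.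
Qed.

Lemma kl_term_le_chi2 (q p : R) : 0 <= q -> 0 < p -> kl_term q p <= (q - p) ^+ 2 / p.
Proof.
move=> q0 p0; rewrite /kl_term; have [->|qn0] := eqVneq q 0.
  by rewrite subr0 add0r sub0r sqrrN expr2 mulrK // unitfE gt_eqF.
have lnle : ln (q / p) <= q / p - 1.
  have := @le_ln1Dx R (q / p - 1); rewrite (addrC 1) subrK; apply.
  by rewrite ltrBrDl addrN divr_gt0 // lt_neqAle eq_sym qn0.
have -> : (q - p) ^+ 2 / p = q * (q / p - 1) - q + p by field; rewrite gt_eqF.
by rewrite !lerD2r ler_wpM2l.
Qed.

Lemma kl_term_le {q p : R} : 0 < p -> `|q - p| < p ->
  kl_term q p <= (q - p) ^+ 2 / (2 * (p - `|q - p|)).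
Proof.
move=> p0 qp; have q0 : 0 < q by move: qp; rewrite ltr_norml => /andP[? _]; lra.
have r0 : 0 < q / p by exact: divr_gt0.
have d0 : 0 < p - `|q - p| by rewrite subr_gt0.
rewrite /kl_term (gt_eqF q0).
have [pq|qp'] := leP p q.
- have r1 : 1 <= q / p by rewrite ler_pdivlMr // mul1r.
  apply: (@le_trans _ _ ((q - p) ^+ 2 / (2 * p))).
    have -> : (q - p) ^+ 2 / (2 * p) = q * ((q / p - (q / p)^-1) / 2) - q + p.
      by field; rewrite !gt_eqF.
    by rewrite !lerD2r ler_wpM2l ?ln_le_ge1 // ltW.
  by rewrite ler_wpdiv2l ?sqr_ge0 ?mulr_gt0 // ler_wpM2l // gerBl.
- have r1 : q / p <= 1 by rewrite ler_pdivrMr // mul1r ltW.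
  have qp2 : 0 < q + p by rewrite addr_gt0.
  apply: (@le_trans _ _ ((q - p) ^+ 2 / (q + p))).
    have -> : (q - p) ^+ 2 / (q + p) = q * (2 - 4 * (q / p + 1)^-1) - q + p.
      by field; rewrite !gt_eqF // addr_gt0.
    by rewrite !lerD2r ler_wpM2l ?ln_le_le1 // ltW.
  by rewrite ler_wpdiv2l ?sqr_ge0 ?mulr_gt0 // ltr0_norm ?subr_lt0 //; lra.
Qed.

Context {T : finType}.
Implicit Types q p : T -> R.

Lemma KL_sum_kl_term q p : \sum_t q t = \sum_t p t ->
  KL q p = \sum_t kl_term (q t) (p t).
Proof. by move=> qp; rewrite /kl_term !big_split /= sumrN qp subrK. Qed.

Lemma KL_le_chi2 {q p : T -> R} : (forall t, 0 <= q t) -> (forall t, 0 < p t) ->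
  \sum_t q t = \sum_t p t -> KL q p <= chi2 q p.
Proof.
move=> q0 p0 qp; rewrite KL_sum_kl_term //.
by apply: ler_sum => t _; apply: kl_term_le_chi2.
Qed.

Lemma ler_sum_term (F : T -> R) (x : T) : (forall t, 0 <= F t) -> F x <= \sum_t F t.
Proof. by move=> F0; rewrite (bigD1 x) //= lerDl sumr_ge0. Qed.

Lemma KL_ge_chi2_local {q p : T -> R} {K : R} :
  (forall t, 0 <= q t) -> (forall t, 0 < p t) -> \sum_t q t = \sum_t p t ->
  0 <= K -> (forall t, `|q t - p t| <= K * p t) ->
  chi2 q p / (2 * (1 + K)) <= KL q p.
Proof.
move=> q0 p0 qp K0 qpK; rewrite KL_sum_kl_term // /chi2 mulr_suml.
apply: ler_sum => t _; apply: le_trans _ (kl_term_ge (q0 t) (p0 t)).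
have w0 : 0 < q t + 2 * p t by rewrite ltr_wpDl ?mulr_gt0.
have K1 : 0 < 1 + K by rewrite ltr_wpDr.
have -> : (q t - p t) ^+ 2 / p t / (2 * (1 + K)) =
    (q t - p t) ^+ 2 / (2 * (p t * (1 + K))).
  by field; rewrite !gt_eqF.
have -> : 3 * (q t - p t) ^+ 2 / (2 * (q t + 2 * p t)) =
    (q t - p t) ^+ 2 / (2 * (q t + 2 * p t) / 3).
  by field; rewrite gt_eqF.
rewrite ler_wpdiv2l ?sqr_ge0 ?divr_gt0 ?mulr_gt0 //.
have := ler_norm (q t - p t); have := qpK t; have := mulr_ge0 K0 (ltW (p0 t)).
lra.
Qed.

Lemma KL_le_chi2_local {q p : T -> R} {K : R} : (forall t, 0 < p t) ->
  \sum_t q t = \sum_t p t -> K < 1 -> (forall t, `|q t - p t| <= K * p t) ->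
  KL q p <= chi2 q p / (2 * (1 - K)).
Proof.
move=> p0 qp K1 qpK; rewrite KL_sum_kl_term // /chi2 mulr_suml.
apply: ler_sum => t _.
have K1' : 0 < 1 - K by rewrite subr_gt0.
have Kp : K * p t < p t by have := p0 t; nra.
apply: le_trans (kl_term_le (p0 t) (le_lt_trans (qpK t) Kp)) _.
have -> : (q t - p t) ^+ 2 / p t / (2 * (1 - K)) =
    (q t - p t) ^+ 2 / (2 * (p t * (1 - K))).
  by field; rewrite !gt_eqF.
rewrite ler_wpdiv2l ?sqr_ge0 ?mulr_gt0 //.
have := qpK t; lra.
Qed.

Lemma abs_le_half_sum (f : T -> R) (x : T) : \sum_t f t = 0 ->
  `|f x| <= (\sum_t `|f t|) / 2.
Proof.
rewrite (bigD1 x) //= => /eqP; rewrite addr_eq0 => /eqP fx.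
have : `|f x| <= \sum_(t | t != x) `|f t| by rewrite fx normrN ler_norm_sum.
by rewrite [X in _ <= X / 2](bigD1 x) //=; lra.
Qed.

(* Cauchy--Schwarz: sum [2 L |d| <= S d^2 / w + L^2 w / S] over [t]. *)
Lemma sqr_sum_abs_le (d w : T -> R) : (forall t, 0 < w t) ->
  (\sum_t `|d t|) ^+ 2 <= (\sum_t w t) * \sum_t d t ^+ 2 / w t.
Proof.
move=> w0; set L := \sum_t _; set S := \sum_t w t; set C := \sum_t _ / _.
have wS t : w t <= S by apply: ler_sum_term => u; exact: ltW.
have [S0|Sn0] := eqVneq S 0.
  suff -> : L = 0 by rewrite expr0n /= S0 mul0r.
  by apply: big1 => t _; move: (wS t); rewrite S0 (lt_geF (w0 t)).
have S0 : 0 < S by rewrite lt_neqAle eq_sym Sn0 sumr_ge0 // => t _; exact: ltW.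
have term t : 2 * L * `|d t| <= S * (d t ^+ 2 / w t) + L ^+ 2 / S * w t.
  rewrite -subr_ge0 -(real_normK (num_real (d t))).
  have -> : S * (`|d t| ^+ 2 / w t) + L ^+ 2 / S * w t - 2 * L * `|d t| =
      (S * `|d t| - L * w t) ^+ 2 / (S * w t).
    by field; rewrite !gt_eqF.
  by rewrite divr_ge0 ?sqr_ge0 // mulr_ge0 // ltW.
have : \sum_t 2 * L * `|d t| <= \sum_t (S * (d t ^+ 2 / w t) + L ^+ 2 / S * w t).
  by apply: ler_sum => t _; exact: term.
rewrite -mulr_sumr big_split /= -!mulr_sumr -/L -/C -/S divfK ?gt_eqF //.
rewrite expr2; lra.
Qed.

Lemma pinsker {q p : T -> R} : (forall t, 0 <= q t) -> (forall t, 0 < p t) ->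
  \sum_t q t = 1 -> \sum_t p t = 1 -> (\sum_t `|q t - p t|) ^+ 2 / 2 <= KL q p.
Proof.
move=> q0 p0 q1 p1.
have w0 t : 0 < q t + 2 * p t by rewrite ltr_wpDl ?mulr_gt0.
have w3 : \sum_t (q t + 2 * p t) = 3 by rewrite big_split /= -mulr_sumr q1 p1 mulr1.
apply: (@le_trans _ _ (3 / 2 * \sum_t (q t - p t) ^+ 2 / (q t + 2 * p t))).
  by have := @sqr_sum_abs_le (fun t => q t - p t) _ w0; rewrite w3; lra.
rewrite KL_sum_kl_term ?q1 ?p1 // mulr_sumr; apply: ler_sum => t _.
apply: le_trans _ (kl_term_ge (q0 t) (p0 t)).
have -> : 3 / 2 * ((q t - p t) ^+ 2 / (q t + 2 * p t)) =
    3 * (q t - p t) ^+ 2 / (2 * (q t + 2 * p t)) by field; rewrite gt_eqF.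
by [].
Qed.

Lemma chi2_le_sqr_l1 {q p : T -> R} {m : R} :
  (forall t, 0 < p t) -> \sum_t q t = \sum_t p t -> 0 < m -> (forall t, m <= p t) ->
  chi2 q p <= (\sum_t `|q t - p t|) ^+ 2 / (2 * m).
Proof.
move=> p0 qp m0 mp; set L := \sum_t _.
have half t : `|q t - p t| <= L / 2 by apply: abs_le_half_sum; rewrite sumrB qp subrr.
have -> : L ^+ 2 / (2 * m) = \sum_t `|q t - p t| * (L / 2) / m.
  by rewrite -!mulr_suml -/L; field; rewrite gt_eqF.
apply: ler_sum => t _.
apply: (@le_trans _ _ ((q t - p t) ^+ 2 / m)); first by rewrite ler_wpdiv2l ?sqr_ge0.
apply: ler_wpM2r; first by rewrite invr_ge0 ltW.
by rewrite -(real_normK (num_real (q t - p t))) expr2 ler_wpM2l.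
Qed.

Lemma KL_ge_min_chi2 {q p : T -> R} {m : R} :
  (forall t, 0 <= q t) -> (forall t, 0 < p t) -> \sum_t q t = 1 -> \sum_t p t = 1 ->
  0 < m -> (forall t, m <= p t) ->
  m * chi2 q p <= KL q p.
Proof.
move=> q0 p0 q1 p1 m0 mp; apply: le_trans _ (pinsker q0 p0 q1 p1).
have -> : (\sum_t `|q t - p t|) ^+ 2 / 2 =
    m * ((\sum_t `|q t - p t|) ^+ 2 / (2 * m)) by field; rewrite gt_eqF.
apply: ler_wpM2l; first exact: ltW.
by apply: chi2_le_sqr_l1; rewrite ?q1 ?p1.
Qed.

Lemma exists_relative_bound (f : T -> R) {p : T -> R} : (forall t, 0 < p t) ->
  exists2 K, 0 <= K & forall t, `|f t| <= K * p t.
Proof.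
move=> p0; have ratio0 t : 0 <= `|f t| / p t by rewrite divr_ge0 // ltW.
exists (\sum_t `|f t| / p t); first exact: sumr_ge0.
move=> t; rewrite -ler_pdivrMr //; exact: ler_sum_term.
Qed.

Lemma mix_pmf {q p : T -> R} {s : R} : is_pmf q -> is_pmf p -> 0 <= s <= 1 ->
  is_pmf (fun t => p t + s * (q t - p t)).
Proof.
move=> [q0 q1] [p0 p1] /andP[s0 s1]; split.
  move=> t; have -> : p t + s * (q t - p t) = (1 - s) * p t + s * q t by ring.
  by rewrite addr_ge0 ?mulr_ge0 ?subr_ge0.
by rewrite big_split /= -mulr_sumr sumrB q1 p1 subrr mulr0 addr0.
Qed.

Lemma chi2_ge0 q p : (forall t, 0 < p t) -> 0 <= chi2 q p.
Proof. by move=> p0; apply: sumr_ge0 => t _; rewrite divr_ge0 ?sqr_ge0 // ltW. Qed.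

Lemma chi2_mix q p (s : R) : chi2 (fun t => p t + s * (q t - p t)) p = s ^+ 2 * chi2 q p.
Proof.
by rewrite /chi2 mulr_sumr; apply: eq_bigr => t _; rewrite addrAC subrr add0r exprMn mulrA.
Qed.
End Divergences.

Lemma lee_of_linear_approx {R : realFieldType} (s : \bar R) (a c d : R) : 0 < d ->
  (forall t, 0 < t <= d -> ((a - c * t)%:E <= s)%E) -> (a%:E <= s)%E.
Proof.
move=> d0 approx; apply/lee_addgt0Pr => e e0.
have c1 : 0 < `|c| + 1 by rewrite ltr_wpDl.
have [t /andP[t0 td] ct] : exists2 t, 0 < t <= d & c * t <= e.
  have ce0 : 0 < e / (`|c| + 1) by rewrite divr_gt0.
  have m0 : 0 < Num.min d (e / (`|c| + 1)) by rewrite lt_min d0 ce0.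
  exists (Num.min d (e / (`|c| + 1))); first by rewrite m0 ge_min lexx.
  apply: le_trans (ler_norm _) _; rewrite normrM (gtr0_norm m0).
  apply: (@le_trans _ _ (`|c| * (e / (`|c| + 1)))).
    by apply: ler_wpM2l => //; rewrite ge_min lexx orbT.
  by rewrite mulrA ler_pdivrMr //; nra.
move: (approx t); rewrite t0 td => /(_ isT) /(leeD2r e%:E) sle.
by apply: le_trans _ sle; rewrite -EFinD lee_fin; lra.
Qed.

Lemma ratio_ge_of_local_bounds {R : realFieldType} (A B x y k k' : R) :
  0 <= A -> 0 < B -> 0 <= k -> 0 <= k' -> k' < 1 ->
  A / (2 * (1 + k)) <= x -> 0 < y -> y <= B / (2 * (1 - k')) ->
  A / B - A / B * (k + k') <= x / y.
Proof.
move=> A0 B0 k0 k'0 k'1 Ax y0 yB.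
have k1 : 0 < 1 + k by rewrite ltr_wpDr.
have k'1' : 0 < 1 - k' by rewrite subr_gt0.
apply: (@le_trans _ _ (A / (2 * (1 + k)) / (B / (2 * (1 - k'))))).
  have -> : A / (2 * (1 + k)) / (B / (2 * (1 - k'))) = A / B * ((1 - k') / (1 + k)).
    by field; rewrite !gt_eqF.
  rewrite -[X in X - _]mulr1 -mulrBr; apply: ler_wpM2l; first by rewrite divr_ge0 // ltW.
  by rewrite ler_pdivlMr //; nra.
apply: (@le_trans _ _ (x / (B / (2 * (1 - k'))))).
  by apply: ler_wpM2r; rewrite // invr_ge0 divr_ge0 ?mulr_ge0 // ltW.
by rewrite ler_wpdiv2l // (le_trans _ Ax) // divr_ge0 ?mulr_ge0 // ltW.
Qed.

Lemma minf_attained {R : realType} {T : finType} (f : T -> R) (x : T) :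
  exists2 y, minf f = f y & forall t, f y <= f t.
Proof.
set v := \big[mine/+oo%E]_t (f t)%:E.
have v_le t : (v <= (f t)%:E)%E by rewrite /v (bigD1 t) //= ge_min lexx.
have : v = +oo%E \/ exists y, v = (f y)%:E.
  apply: (big_rec (fun v => v = +oo%E \/ exists y, v = (f y)%:E)); first by left.
  move=> t _ _ [->|[y ->]]; right; rewrite minEle.
    by exists t; rewrite leey.
  by case: ifP => _; [exists t|exists y].
case=> [voo|[y vy]]; first by have := v_le x; rewrite voo leye_eq.
exists y; first by rewrite /minf -/v vy.
by move=> t; have := v_le t; rewrite vy lee_fin.
Qed.

Section Channel.
Context {R : realType} {X Y : finType} (PXY : X -> Y -> R).
Hypothesis PXY_ge0 : forall x y, 0 <= PXY x y.
Hypothesis PX_gt0 : forall x, 0 < margX PXY x.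
Hypothesis PY_gt0 : forall y, 0 < margY PXY y.
Hypothesis PX_sum1 : \sum_x margX PXY x = 1.

Local Notation P := (margX PXY).
Local Notation W := (applyW PXY).

Lemma applyW_margX y : W P y = margY PXY y.
Proof. by apply: eq_bigr => x _; rewrite /chanW divfK // gt_eqF. Qed.

Lemma WP_gt0 y : 0 < W P y.
Proof. by rewrite applyW_margX. Qed.

Lemma applyW_ge0 {Q : X -> R} : (forall x, 0 <= Q x) -> forall y, 0 <= W Q y.
Proof.
move=> Q0 y; apply: sumr_ge0 => x _.
by rewrite mulr_ge0 // divr_ge0 // ltW.
Qed.

Lemma sum_applyW Q : \sum_y W Q y = \sum_x Q x.
Proof.
rewrite exchange_big /=; apply: eq_bigr => x _.
by rewrite /chanW -!mulr_suml -/(margX PXY x) divff ?mul1r // gt_eqF.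
Qed.

Lemma applyW_mix (Q Q' : X -> R) (s : R) y :
  W (fun x => Q x + s * (Q' x - Q x)) y = W Q y + s * (W Q' y - W Q y).
Proof. by rewrite /applyW -sumrB mulr_sumr -big_split; apply: eq_bigr => x _ /=; ring. Qed.

Lemma P_pmf : is_pmf P.
Proof. by split=> // x; exact: ltW. Qed.

Lemma eta_KL_le_eta_chi2_div (m : R) : 0 < m -> (forall x, m <= P x) ->
  (eta_KL PXY <= eta_chi2 PXY * (m^-1)%:E)%E.
Proof.
move=> m0 mP; apply: ge_ereal_sup => _ [Q [[Q0 Q1] KL0] <-].
have WQ1 : \sum_y W Q y = \sum_y W P y by rewrite !sum_applyW Q1 PX_sum1.
have chi0 : 0 < chi2 Q P.
  by apply: lt_le_trans KL0 (KL_le_chi2 Q0 PX_gt0 _); rewrite Q1 PX_sum1.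
have KLX := KL_ge_min_chi2 Q0 PX_gt0 Q1 PX_sum1 m0 mP.
have KLY := KL_le_chi2 (applyW_ge0 Q0) WP_gt0 WQ1.
have chi_le : ((chi2 (W Q) (W P) / chi2 Q P)%:E <= eta_chi2 PXY)%E.
  by apply: ereal_sup_ubound; exists Q.
have m1 : (0 <= (m^-1)%:E)%E by rewrite lee_fin invr_ge0 ltW.
apply: le_trans _ (lee_wpmul2r m1 chi_le); rewrite -EFinM lee_fin.
apply: (@le_trans _ _ (chi2 (W Q) (W P) / KL Q P)).
  by apply: ler_wpM2r; rewrite // invr_ge0 ltW.
have -> : chi2 (W Q) (W P) / chi2 Q P / m = chi2 (W Q) (W P) / (m * chi2 Q P).
  by field; rewrite !gt_eqF.
by apply: ler_wpdiv2l; [exact: chi2_ge0 WP_gt0 | exact: mulr_gt0 | exact: KLX].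
Qed.

Lemma chi2_ratio_le_eta_KL Q : is_pmf Q -> 0 < chi2 Q P ->
  ((chi2 (W Q) (W P) / chi2 Q P)%:E <= eta_KL PXY)%E.
Proof.
move=> Qpmf chi0; set a := chi2 (W Q) (W P) / chi2 Q P.
have [K' K'0 QK'] := exists_relative_bound (fun x => Q x - P x) PX_gt0.
have [K K0 WQK] := exists_relative_bound (fun y => W Q y - W P y) WP_gt0.
have K'1 : 0 < 1 + K' by rewrite ltr_wpDr.
apply: (@lee_of_linear_approx _ _ a (a * (K + K')) (1 + K')^-1); first by rewrite invr_gt0.
move=> t /andP[t0 td].
have tK'1 : t * (1 + K') <= 1 by rewrite -ler_pdivlMr // mul1r.
have tK' : t * K' < 1 by nra.
have t1 : 0 <= t <= 1 by apply/andP; split; nra.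
pose Qt x := P x + t * (Q x - P x).
have [Qt0 Qt1] : is_pmf Qt := mix_pmf Qpmf P_pmf t1.
have sumX : \sum_x Qt x = \sum_x P x by rewrite Qt1 PX_sum1.
have sumY : \sum_y W Qt y = \sum_y W P y by rewrite !sum_applyW Qt1 PX_sum1.
have dX x : `|Qt x - P x| <= t * K' * P x.
  by rewrite /Qt addrAC subrr add0r normrM gtr0_norm // -mulrA ler_wpM2l // ltW.
have dY y : `|W Qt y - W P y| <= t * K * W P y.
  by rewrite applyW_mix addrAC subrr add0r normrM gtr0_norm // -mulrA ler_wpM2l // ltW.
have KLX_le := KL_le_chi2_local PX_gt0 sumX tK' dX.
have KLX_ge := KL_ge_chi2_local Qt0 PX_gt0 sumX (mulr_ge0 (ltW t0) K'0) dX.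
have KLY_ge := KL_ge_chi2_local (applyW_ge0 Qt0) WP_gt0 sumY (mulr_ge0 (ltW t0) K0) dY.
have chiX : chi2 Qt P = t ^+ 2 * chi2 Q P := chi2_mix Q P t.
have chiY : chi2 (W Qt) (W P) = t ^+ 2 * chi2 (W Q) (W P).
  by rewrite -chi2_mix; congr chi2; apply/funext => y; rewrite applyW_mix.
have KL0 : 0 < KL Qt P.
  apply: lt_le_trans KLX_ge; rewrite chiX divr_gt0 ?mulr_gt0 ?exprn_gt0 //.
  by rewrite ltr_wpDr // mulr_ge0 // ltW.
have ub : ((KL (W Qt) (W P) / KL Qt P)%:E <= eta_KL PXY)%E.
  by apply: ereal_sup_ubound; exists Qt.
apply: le_trans _ ub; rewrite lee_fin.
have -> : a - a * (K + K') * t = chi2 (W Qt) (W P) / chi2 Qt P -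
    chi2 (W Qt) (W P) / chi2 Qt P * (t * K + t * K').
  by rewrite chiX chiY /a; field; rewrite !gt_eqF.
apply: ratio_ge_of_local_bounds => //; first exact: chi2_ge0 WP_gt0.
- by rewrite chiX mulr_gt0 ?exprn_gt0.
- by rewrite mulr_ge0 // ltW.
- by rewrite mulr_ge0 // ltW.
Qed.

Lemma eta_chi2_le_eta_KL : (eta_chi2 PXY <= eta_KL PXY)%E.
Proof. by apply: ge_ereal_sup => _ [Q [Qpmf chi0] <-]; exact: chi2_ratio_le_eta_KL. Qed.
End Channel.

Theorem theorem2 (R : realType) (X Y : finType) (PXY : X -> Y -> R)
  (hX : (1 < #|X|)%N) (hY : (1 < #|Y|)%N)
  (hP0 : forall x y, 0 <= PXY x y)
  (hP1 : \sum_x \sum_y PXY x y = 1)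
  (hPX : forall x, 0 < margX PXY x)
  (hPY : forall y, 0 < margY PXY y) :
  (eta_chi2 PXY <= eta_KL PXY)%E /\
  (eta_KL PXY <= eta_chi2 PXY * ((minf (margX PXY))^-1)%:E)%E.
Proof.
split; first exact: eta_chi2_le_eta_KL.
have [x0 _] := card_gt0P (ltnW hX).
have [xm minE minP] := minf_attained (margX PXY) x0.
by apply: eta_KL_le_eta_chi2_div; rewrite // minE.
Qed.
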